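(* Let $W$ be the Witt algebra with basis $\{x_n\mid n\in\mathbb{Z}\}$ and bracket $[x_m,x_n]=(n-m)x_{m+n}$, and let $V$ be a left-symmetric algebra structure on the underlying space of $W$ with product $x_mx_n=f(m,n)x_{m+n}$ for some $f:\mathbb{Z}\times\mathbb{Z}\to\mathbb{C}$ and with $x_mx_n-x_nx_m=(n-m)x_{m+n}$. Regard $V$ as a $W$-module via left multiplication. Then for no $\alpha\in\mathbb{C}$ is $V$ isomorphic as a $W$-module to $A_\alpha$, the $W$-module with basis $\{v_n\mid n\in\mathbb{Z}\}$ and action $x_iv_n=(n+i)v_{n+i}$ for $n\neq0$, $x_iv_0=i(\alpha+i)v_i$.
   Context: A left-symmetric algebra is a vector space with bilinear product satisfying $(xy)z-x(yz)=(yx)z-y(xz)$; left multiplication then gives a representation of the commutator Lie algebra. *)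

From HB Require Import structures.
From mathcomp Require Import all_boot all_order all_algebra.
From mathcomp Require Import complex.
From mathcomp Require Import Rstruct.
From Stdlib Require Import Reals.
Set Implicit Arguments. Unset Strict Implicit. Unset Printing Implicit Defensive.
Import Order.TTheory GRing.Theory Num.Theory.
Local Open Scope ring_scope.

Definition C : Type := complex R.

(* Vectors of a space with basis indexed by Z are finitely supported
   coefficient functions Z -> C. *)
Definition finsupp (u : int -> C) : Prop :=
  exists s : seq int, forall k, k \notin s -> u k = 0.

(* Left-symmetric product x_m x_n = f(m,n) x_(m+n):
   (x_m x_n) x_p - x_m (x_n x_p) = (x_n x_m) x_p - x_n (x_m x_p). *)
Definition left_symmetric (f : int -> int -> C) : Prop :=
  forall m n p : int,
    f m n * f (m + n) p - f n p * f m (n + p)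
    = f n m * f (n + m) p - f m p * f n (m + p).

Definition witt_commutator (f : int -> int -> C) : Prop :=
  forall m n : int, f m n - f n m = (n - m)%:~R.

(* Left multiplication action of x_i on V: x_i (sum u_n x_n) = sum u_n f(i,n) x_(i+n). *)
Definition actV (f : int -> int -> C) (i : int) (u : int -> C) : int -> C :=
  fun k => f i (k - i) * u (k - i).

Definition actA (alpha : C) (i : int) (u : int -> C) : int -> C :=
  fun k => (if k - i == 0 then i%:~R * (alpha + i%:~R) else k%:~R) * u (k - i).

Definition W_module_iso (f : int -> int -> C) (alpha : C)
    (phi : (int -> C) -> (int -> C)) : Prop :=
  [/\ forall u, finsupp u -> finsupp (phi u),
      forall (a : C) u v, finsupp u -> finsupp v ->
        phi (fun k => a * u k + v k) = (fun k => a * phi u k + phi v k),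
      forall u v, finsupp u -> finsupp v -> phi u = phi v -> u = v,
      forall w, finsupp w -> exists2 u, finsupp u & phi u = w
    & forall i u, finsupp u -> phi (actV f i u) = actA alpha i (phi u)].

(* The eigenvector x_0 v_0 = 0 of A_alpha pulls back to a vector u of V with
   x_0 u = 0; since x_0 x_n = f(0,n) x_n, some f(0,n) vanishes.  Then x_n is
   killed by x_0 as well, and the kernel of x_0 on A_alpha is spanned by v_0,
   so the image of x_n has a nonzero v_0-coordinate.  No x_i ever produces a
   v_0-component, so applying the isomorphism to x_i x_(n-i) = f(i,n-i) x_n
   forces f(i,n-i) = 0 for every i.  The commutator relation then gives
   0 = f(i,n-i) - f(n-i,i) = n - 2i for all i, which is absurd. *)
From mathcomp Require Import all_boot all_order all_algebra.
From mathcomp Require Import complex Rstruct.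
From Stdlib Require Import FunctionalExtensionality Classical.
From mathcomp Require Import zify.
Import Order.TTheory GRing.Theory Num.Theory.
Local Open Scope ring_scope.

Definition vzero : int -> C := fun _ => (0 : C).

Definition basisv (n : int) : int -> C := fun k => (k == n)%:R : C.

Lemma finsupp_vzero : finsupp vzero.
Proof. by exists [::]. Qed.

Lemma finsupp_basisv n : finsupp (basisv n).
Proof. by exists [:: n] => k; rewrite inE /basisv => /negbTE ->. Qed.

#[local] Hint Resolve finsupp_vzero finsupp_basisv : core.

Lemma basisv_neq0 n : basisv n <> vzero.
Proof. by move/(congr1 (fun u => u n))/eqP; rewrite /basisv /vzero eqxx oner_eq0. Qed.

Lemma finsupp_actV f i u : finsupp u -> finsupp (actV f i u).
Proof.
case=> s Hs; exists (map (fun x => x + i) s) => k hk.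
rewrite /actV Hs ?mulr0 //; apply: contra hk => h.
by apply/mapP; exists (k - i) => //; rewrite subrK.
Qed.

Lemma actV_basisv f (i n : int) :
  actV f i (basisv (n - i)) = fun k => f i (n - i) * basisv n k.
Proof.
apply: functional_extensionality => k.
rewrite /actV /basisv (inj_eq (addIr _)).
by case: eqP => [->|_]; rewrite ?mulr0.
Qed.

Lemma actA_at0 alpha (i : int) w : actA alpha i w 0 = 0.
Proof.
rewrite /actA sub0r oppr_eq0.
by case: eqP => [->|_]; rewrite ?mulr0z ?mul0r.
Qed.

Lemma actA_basisv0 alpha : actA alpha 0 (basisv 0) = vzero.
Proof.
apply: functional_extensionality => k.
by rewrite /actA /basisv /vzero subr0; case: eqP; rewrite ?mulr0z ?mul0r ?mulr0.
Qed.

Lemma kernel_actA0 alpha w (k : int) : actA alpha 0 w = vzero -> k != 0 -> w k = 0.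
Proof.
move=> /(congr1 (fun u => u k)) /eqP; rewrite /actA /vzero subr0 => + nz_k.
by rewrite (negbTE nz_k) mulf_eq0 intr_eq0 (negbTE nz_k) => /eqP.
Qed.

Lemma witt_commutator_antidiagonal f (n : int) :
  witt_commutator f -> ~ (forall i : int, f i (n - i) = 0).
Proof.
move=> comm vanish.
have n_eq_2i i : n - i - i = 0.
  have := vanish (n - i); rewrite subKr => vanish_sym.
  have := comm i (n - i); rewrite vanish vanish_sym subrr.
  by move=> /esym /eqP; rewrite intr_eq0 => /eqP.
by have := n_eq_2i 0; have := n_eq_2i 1; lia.
Qed.

Section ModuleIsomorphism.

Context {f : int -> int -> C} {alpha : C} {phi : (int -> C) -> int -> C}.
Hypothesis iso : W_module_iso f alpha phi.

Lemma phi_vzero : phi vzero = vzero.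
Proof.
case: iso => _ lin _ _ _.
have := lin (-1) _ _ finsupp_vzero finsupp_vzero.
have -> : (fun k => -1 * vzero k + vzero k) = vzero.
  by apply: functional_extensionality => k; rewrite /vzero mulr0 addr0.
move=> e; apply: functional_extensionality => k.
by have := congr1 (fun u => u k) e => /= ->; rewrite mulN1r addNr.
Qed.

Lemma phi_eq_vzero u : finsupp u -> phi u = vzero -> u = vzero.
Proof.
by case: iso => _ _ inj _ _ fs_u; rewrite -{1}phi_vzero; apply: inj fs_u finsupp_vzero.
Qed.

Lemma phi_scale a u : finsupp u -> phi (fun k => a * u k) = fun k => a * phi u k.
Proof.
case: iso => _ lin _ _ _ fs_u.
have -> : (fun k => a * u k) = fun k => a * u k + vzero k.
  by apply: functional_extensionality => k; rewrite /vzero addr0.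
rewrite lin // phi_vzero.
by apply: functional_extensionality => k; rewrite /vzero addr0.
Qed.

Lemma exists_f0_vanishing : exists n : int, f 0 n = 0.
Proof.
case: iso => _ _ inj surj act.
have [u fs_u phi_u] := surj _ (finsupp_basisv 0).
have x0_u : actV f 0 u = vzero.
  apply: phi_eq_vzero; first exact: finsupp_actV.
  by rewrite act // phi_u actA_basisv0.
have [n u_n] : exists n, u n != 0.
  apply: NNPP => nz_u; apply: (@basisv_neq0 0); rewrite -phi_u.
  have -> : u = vzero.
    apply: functional_extensionality => k; apply/eqP; apply: contraT => u_k.
    by case: nz_u; exists k.
  exact: phi_vzero.
exists n; have := congr1 (fun v => v n) x0_u.
by rewrite /actV /vzero subr0 => /eqP; rewrite mulf_eq0 (negbTE u_n) orbF => /eqP.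
Qed.

Lemma phi_basisv_at0 (n : int) : f 0 n = 0 -> phi (basisv n) 0 != 0.
Proof.
case: iso => _ _ _ _ act f0n; apply/eqP => phi_n0.
have x0_n : actV f 0 (basisv n) = vzero.
  apply: functional_extensionality => k; rewrite /actV /basisv /vzero subr0.
  by case: eqP => [->|_]; rewrite ?f0n ?mul0r ?mulr0.
have x0_phi : actA alpha 0 (phi (basisv n)) = vzero.
  by rewrite -act // x0_n phi_vzero.
apply: (@basisv_neq0 n); apply: phi_eq_vzero; first exact: finsupp_basisv.
apply: functional_extensionality => k.
have [->|nz_k] := eqVneq k 0; first exact: phi_n0.
exact: kernel_actA0 x0_phi nz_k.
Qed.

Lemma antidiagonal_vanishing (n : int) : f 0 n = 0 -> forall i : int, f i (n - i) = 0.
Proof.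
case: iso => _ _ _ _ act f0n i.
have := congr1 (fun v => phi v 0) (actV_basisv f i n).
rewrite /= act // actA_at0 phi_scale //.
by move=> /esym /eqP; rewrite mulf_eq0 (negbTE (phi_basisv_at0 n f0n)) orbF => /eqP.
Qed.

End ModuleIsomorphism.

Theorem theorem3p6 (f : int -> int -> C) :
  left_symmetric f -> witt_commutator f ->
  forall alpha : C, ~ exists phi, W_module_iso f alpha phi.
Proof.
move=> _ comm alpha [phi iso].
have [n f0n] := exists_f0_vanishing iso.
exact: witt_commutator_antidiagonal f n comm (antidiagonal_vanishing iso n f0n).
Qed.
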